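(* Let $H$ be a tame histogram bounded from below by a horizontal segment $pq$ and from above by an $x$-monotone rectilinear $pq$-path $L$. Let $a,b\in L$ be such that $b$ is a bottom-most point of the subpath $L_{ab}$ of $L$ between $a$ and $b$. Then $\|L_{ab}\|\le 2|x(a)-x(b)|+|y(a)-y(b)|$.
   Context: A polygon is weakly simple if it can be approximated arbitrarily closely (vertex by vertex) by simple polygons. An $x$-monotone histogram is a rectilinear weakly simple polygon bounded by a horizontal segment $pq$ and an $x$-monotone rectilinear $pq$-path $L$. A chord of $H$ is a segment $cd$ with $c,d\in\partial H$ and $cd\subset H$. A tame histogram is an $x$-monotone histogram such that for every horizontal chord $cd$ with $c,d\in L$, the subpath $L_{cd}$ of $L$ between $c$ and $d$ satisfies $\|L_{cd}\|\le 2\|cd\|$. *)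

From HB Require Import structures.
From mathcomp Require Import all_boot all_order all_algebra.
Set Implicit Arguments. Unset Strict Implicit. Unset Printing Implicit Defensive.
Import Order.TTheory GRing.Theory Num.Theory.
Local Open Scope ring_scope.

Section Hist.
Variable R : realFieldType.

(* A rectilinear path L is given by its vertices v 0, ..., v m (m segments);
   p = v 0 and q = v m. A point of L is given by a position (i, t) with
   i < m and 0 <= t <= 1, denoting v i + t (v (i+1) - v i). *)

Definition on_path (m : nat) (i : nat) (t : R) : Prop :=
  (i < m)%N /\ 0 <= t <= 1.

Definition point (v : nat -> R * R) (i : nat) (t : R) : R * R :=
  ((v i).1 + t * ((v i.+1).1 - (v i).1), (v i).2 + t * ((v i.+1).2 - (v i).2)).

(* Euclidean length of segment i; for an axis-parallel segment this is
   |dx| + |dy|. *)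
Definition seglen (v : nat -> R * R) (i : nat) : R :=
  `|(v i.+1).1 - (v i).1| + `|(v i.+1).2 - (v i).2|.

Definition plen (v : nat -> R * R) (i : nat) (t : R) : R :=
  \sum_(k < i) seglen v k + t * seglen v i.

Definition sublen (v : nat -> R * R) (i : nat) (t : R) (j : nat) (u : R) : R :=
  `|plen v j u - plen v i t|.

Definition pos_le (i : nat) (t : R) (j : nat) (u : R) : Prop :=
  (i < j)%N \/ (i = j /\ t <= u).

Definition between (i : nat) (t : R) (j : nat) (u : R) (k : nat) (w : R) : Prop :=
  (pos_le i t k w /\ pos_le k w j u) \/ (pos_le j u k w /\ pos_le k w i t).

Definition xmono_rect_path (v : nat -> R * R) (m : nat) : Prop :=
  forall i, (i < m)%N ->
    (v i).1 <= (v i.+1).1 /\ ((v i).1 = (v i.+1).1 \/ (v i).2 = (v i.+1).2).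

Definition histogram (v : nat -> R * R) (m : nat) : Prop :=
  [/\ (0 < m)%N, xmono_rect_path v m, (v 0).2 = (v m).2, (v 0).1 < (v m).1
    & forall i, (i <= m)%N -> (v 0).2 <= (v i).2].

Definition in_H (v : nat -> R * R) (m : nat) (z : R * R) : Prop :=
  [/\ (v 0).1 <= z.1 <= (v m).1, (v 0).2 <= z.2 &
    exists i t, [/\ on_path m i t, (point v i t).1 = z.1 & z.2 <= (point v i t).2]].

Definition seg_in_H (v : nat -> R * R) (m : nat) (c d : R * R) : Prop :=
  forall l : R, 0 <= l <= 1 ->
    in_H v m (c.1 + l * (d.1 - c.1), c.2 + l * (d.2 - c.2)).

Definition tame_histogram (v : nat -> R * R) (m : nat) : Prop :=
  histogram v m /\
  forall i t j u, on_path m i t -> on_path m j u ->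
    (point v i t).2 = (point v j u).2 ->
    seg_in_H v m (point v i t) (point v j u) ->
    sublen v i t j u <= 2 * `|(point v i t).1 - (point v j u).1|.

End Hist.

From HB Require Import structures.
From mathcomp Require Import all_boot all_order all_algebra.
From mathcomp Require Import ring lra.
Import Order.TTheory GRing.Theory Num.Theory.
Local Open Scope ring_scope.
Set Implicit Arguments. Unset Strict Implicit.

(* Traverse L from the earlier endpoint a. The invariant is
     ||L_az|| <= 2 (x(z) - x(a)) + y(a) + y(z) - 2 h
   for every point z after a and every height h that L_az never goes below.
   Horizontal and upward moves preserve it directly. For a downward move to a
   point z at height y, either L_az already dipped to y, and then the last
   earlier point c at height y spans with z a horizontal chord inside H, so
   tameness bounds ||L_cz|| by 2 (x(z) - x(c)) and the invariant at c gives it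
   at z; or y is a new minimum, and the descent below the previous minimum is
   paid for by lowering h. Taking h = y(b) gives the lemma. *)

Lemma lerp_ivt (R : realFieldType) (p q u u' z : R) : u <= u' ->
  (p + u * (q - p) <= z <= p + u' * (q - p)) \/
  (p + u' * (q - p) <= z <= p + u * (q - p)) ->
  exists2 w, u <= w <= u' & p + w * (q - p) = z.
Proof.
move=> uu' hz; have [qp|qp] := eqVneq q p.
  exists u; first by rewrite lexx uu'.
  by move: hz; rewrite qp subrr !mulr0 addr0 => -[] /andP[] *; lra.
have hw : (z - p) / (q - p) * (q - p) = z - p by rewrite divfK // subr_eq0.
exists ((z - p) / (q - p)); last by rewrite hw subrKC.
have [d0|d0] := ltP 0 (q - p); case: hz => /andP[] *; apply/andP; split; nra.
Qed.

Section Positions.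
Variable R : realFieldType.
Implicit Types (t u w : R).

Lemma pos_le_refl i t : pos_le i t i t.
Proof. by right. Qed.

Lemma pos_le_total i t j u : pos_le i t j u \/ pos_le j u i t.
Proof.
case: (ltngtP i j) => [ij|ji|<-]; [by left; left|by right; left|].
by case: (leP t u) => tu; [left|right]; right; split=> //; apply: ltW.
Qed.

Lemma between_l i t j u : between i t j u i t.
Proof. by case: (pos_le_total i t j u); [left|right]; split=> //; apply: pos_le_refl. Qed.

Lemma between_r i t j u : between i t j u j u.
Proof. by case: (pos_le_total i t j u); [left|right]; split=> //; apply: pos_le_refl. Qed.

Lemma between_sym i t j u k w : between i t j u k w -> between j u i t k w.
Proof. by case; [right|left]. Qed.

End Positions.

Section Path.
Variables (R : realFieldType) (v : nat -> R * R).

Lemma point_x i t : (point v i t).1 = (v i).1 + t * ((v i.+1).1 - (v i).1).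
Proof. by []. Qed.

Lemma point_y i t : (point v i t).2 = (v i).2 + t * ((v i.+1).2 - (v i).2).
Proof. by []. Qed.

Lemma point0 i : point v i 0 = v i.
Proof. by rewrite /point !mul0r !addr0 -surjective_pairing. Qed.

Lemma point1 i : point v i 1 = v i.+1.
Proof. by rewrite /point !mul1r !subrKC -surjective_pairing. Qed.

Lemma seglen_ge0 i : 0 <= seglen v i.
Proof. exact: addr_ge0. Qed.

Lemma plenS0 j : plen v j.+1 0 = plen v j 1.
Proof. by rewrite /plen big_ord_recr /=; ring. Qed.

Lemma plen_shift j u w : plen v j u = plen v j w + (u - w) * seglen v j.
Proof. rewrite /plen; ring. Qed.

Lemma plen0_mono i j : (i <= j)%N -> plen v i 0 <= plen v j 0.
Proof.
elim: j => [|j IH]; first by rewrite leqn0 => /eqP ->.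
rewrite leq_eqVlt ltnS => /orP[/eqP -> //|/IH ij].
rewrite plenS0 (plen_shift j 1 0); have := seglen_ge0 j; lra.
Qed.

Lemma plen_mono i t j u : pos_le i t j u -> 0 <= t <= 1 -> 0 <= u <= 1 ->
  plen v i t <= plen v j u.
Proof.
move=> [ij|[-> tu]] /andP[t0 t1] /andP[u0 u1]; last first.
  by rewrite (plen_shift j u t) lerDl mulr_ge0 ?subr_ge0 ?seglen_ge0.
have := plen0_mono ij; rewrite plenS0 (plen_shift i 1 0) (plen_shift i t 0).
rewrite (plen_shift j u 0); have := seglen_ge0 i; have := seglen_ge0 j; nra.
Qed.

Lemma vx_mono m i j : xmono_rect_path v m ->
  (i <= j)%N -> (j <= m)%N -> (v i).1 <= (v j).1.
Proof.
move=> xm; elim: j => [|j IH]; first by rewrite leqn0 => /eqP ->.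
rewrite leq_eqVlt ltnS => /orP[/eqP -> //|ij] jm.
exact: le_trans (IH ij (ltnW jm)) (xm j jm).1.
Qed.

Variable m : nat.
Hypothesis hist : histogram v m.

Lemma rect_step i : (i < m)%N -> (v i).1 = (v i.+1).1 \/ (v i).2 = (v i.+1).2.
Proof. by case: hist => _ xm _ _ _ /xm []. Qed.

Lemma vx_step i : (i < m)%N -> (v i).1 <= (v i.+1).1.
Proof. by case: hist => _ xm _ _ _ /xm []. Qed.

Lemma point_x_range i t : on_path m i t -> (v 0).1 <= (point v i t).1 <= (v m).1.
Proof.
case: hist => _ xm _ _ _ [im /andP[t0 t1]]; rewrite point_x.
have := vx_mono xm (leq0n i) (ltnW im); have := vx_mono xm im (leqnn m).
have := (xm i im).1; move=> *; apply/andP; split; nra.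
Qed.

Lemma point_y_ge_base i t : on_path m i t -> (v 0).2 <= (point v i t).2.
Proof.
case: hist => _ _ _ _ base [im /andP[t0 t1]]; rewrite point_y.
have := base i (ltnW im); have := base i.+1 im; nra.
Qed.

Definition path_above (h x1 x2 : R) :=
  x1 <= x2 /\ forall x, x1 <= x <= x2 ->
    exists i t, [/\ on_path m i t, (point v i t).1 = x & h <= (point v i t).2].

Lemma path_above_cat h x1 x2 x3 :
  path_above h x1 x2 -> path_above h x2 x3 -> path_above h x1 x3.
Proof.
move=> [x12 cov12] [x23 cov23].
split=> [|x /andP[x1x xx3]]; first exact: le_trans x23.
have [xx2|x2x] := leP x x2; first by apply: cov12; rewrite x1x xx2.
by apply: cov23; rewrite xx3 ltW.
Qed.

Lemma path_above_seg h i u u' : (i < m)%N -> 0 <= u -> u <= u' -> u' <= 1 ->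
  h <= (point v i u).2 -> h <= (point v i u').2 ->
  path_above h (point v i u).1 (point v i u').1.
Proof.
case: hist => _ xm _ _ _ im u0 uu' u1 hu hu'; have dx := (xm i im).1.
split=> [|x hx]; first by rewrite !point_x; nra.
have [w /andP[uw wu'] xw] := lerp_ivt uu' (or_introl hx).
exists i, w; split; first by split; rewrite ?(le_trans u0 uw) ?(le_trans wu' u1).
  exact: xw.
move: hu hu'; rewrite !point_y.
by have [dy|dy] := leP 0 ((v i.+1).2 - (v i).2); nra.
Qed.

Lemma seg_in_H_chord h i t j u : on_path m i t ->
  (point v i t).2 = h -> (point v j u).2 = h ->
  path_above h (point v i t).1 (point v j u).1 ->
  seg_in_H v m (point v i t) (point v j u).
Proof.
move=> it yc yd [cd cov] l /andP[l0 l1].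
have [k [w [kw xk hk]]] : exists k w, [/\ on_path m k w,
    (point v k w).1 = (point v i t).1 + l * ((point v j u).1 - (point v i t).1)
  & h <= (point v k w).2] by apply: cov; apply/andP; split; nra.
rewrite yc yd subrr mulr0 addr0; split=> /=.
- by rewrite -xk; apply: point_x_range.
- by rewrite -yc; apply: point_y_ge_base.
- by exists k, w.
Qed.

End Path.

Section Tame.
Variables (R : realFieldType) (v : nat -> R * R) (m : nat).
Hypothesis tame : tame_histogram v m.
Let hist : histogram v m := tame.1.

Variables (i0 : nat) (t0 : R).
Hypothesis a_on : on_path m i0 t0.
Local Notation a := (point v i0 t0).

(* Heights along L interpolate between vertices, so only a and the vertices
   after it matter. *)
Definition path_floor h j := h <= a.2 /\ forall k, (i0 < k <= j)%N -> h <= (v k).2.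

Definition path_dips h j := a.2 <= h \/ exists2 k, (i0 < k <= j)%N & (v k).2 <= h.

(* L, traversed from a, enters segment j at parameter seg_start j. *)
Definition seg_start j := if (i0 < j)%N then 0 else t0.

Local Notation s j := (point v j (seg_start j)).

Lemma path_floor_le h j k : (k <= j)%N -> path_floor h j -> path_floor h k.
Proof.
move=> kj [ha hv]; split=> // l /andP[il lk]; apply: hv.
by rewrite il (leq_trans lk kj).
Qed.

Lemma path_floor_attained j : exists g, path_floor g j /\ path_dips g j.
Proof.
elim: j => [|j [g [[ga gv] gd]]].
  by exists a.2; split; [split=> // k /andP[/leq_trans h /h]|left].
have [ij|ji] := ltnP i0 j.+1; last first.
  exists a.2; split; [split=> // k /andP[ik kj]|by left].
  by have := leq_trans ik (leq_trans kj ji); rewrite ltnn.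
exists (Num.min g (v j.+1).2); split.
- split=> [|k /andP[ik]]; first by rewrite ge_min ga.
  rewrite leq_eqVlt ltnS => /orP[/eqP ->|kj]; first by rewrite ge_min lexx orbT.
  by rewrite ge_min gv ?ik.
- rewrite /path_dips; case: (leP g (v j.+1).2) => gj; last first.
    by right; exists j.+1; rewrite ?ij ?leqnn ?lexx.
  case: gd => [|[k /andP[ik kj] kg]]; first by left.
  by right; exists k; rewrite ?ik ?(leq_trans kj).
Qed.

Lemma seg_start_range j : (i0 <= j)%N -> 0 <= seg_start j <= 1.
Proof. by case: a_on => _ ? _; rewrite /seg_start; case: ifP; rewrite ?lexx ?ler01. Qed.

Lemma path_floor_seg_start h j : (i0 <= j)%N -> path_floor h j -> h <= (s j).2.
Proof.
rewrite /seg_start; case: ifP => [ij _ [_ hv]|]; first by rewrite point0 hv // ij leqnn.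
move=> /negbT; rewrite -leqNgt => ji ij [ha _].
by have -> : j = i0 by apply/anti_leq; rewrite ji ij.
Qed.

Lemma pos_le_seg_start j w : (i0 <= j)%N -> seg_start j <= w -> pos_le i0 t0 j w.
Proof.
rewrite /seg_start leq_eqVlt => /orP[/eqP <-|ij]; first by rewrite ltnn; right.
by left.
Qed.

Lemma on_path_seg j w :
  (i0 <= j)%N -> (j < m)%N -> seg_start j <= w <= 1 -> on_path m j w.
Proof.
move=> ij jm /andP[sw w1]; split=> //.
by have /andP[s0 _] := seg_start_range ij; rewrite (le_trans s0 sw).
Qed.

(* c = (k, w) is the left end of a horizontal chord of H at height h whose right
   end lies on the vertical through s j. *)
Definition back_chord j h := exists k w, [/\ on_path m k w, pos_le i0 t0 k w,
  (k < j)%N \/ (k = i0 /\ w = t0), (point v k w).2 = h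
  & path_above v m h (point v k w).1 (s j).1].

Lemma back_chord_a h : path_dips h i0 -> h <= (s i0).2 -> back_chord i0 h.
Proof.
rewrite /seg_start ltnn => dips ha; have ah : a.2 <= h.
  by case: dips => // -[k /andP[ik ki]]; have := leq_trans ik ki; rewrite ltnn.
have -> : h = a.2 by apply/le_anti; rewrite ha ah.
have [i0m /andP[t00 t01]] := a_on.
exists i0, t0; split=> //; [by right; split|by right|].
by rewrite /seg_start ltnn; apply: path_above_seg.
Qed.

Lemma back_chord_exists j h : (i0 <= j)%N -> (j < m)%N -> path_dips h j -> h <= (s j).2 ->
  back_chord j h.
Proof.
elim: j => [|j IH] ij jm dips hs.
  by move: ij dips hs; rewrite leqn0 => /eqP <-; apply: back_chord_a.
move: ij; rewrite leq_eqVlt ltnS => /orP[/eqP ij|ij].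
  by rewrite -ij in dips hs *; apply: back_chord_a.
have sS : s j.+1 = v j.+1 by rewrite /seg_start ltnS ij point0.
rewrite sS in hs.
have /andP[s0 s1] := seg_start_range ij.
have seg_ok w : seg_start j <= w <= 1 -> on_path m j w /\ pos_le i0 t0 j w.
  move=> sw1; have /andP[sw _] := sw1.
  by split; [exact: on_path_seg ij (ltnW jm) sw1|exact: pos_le_seg_start].
have [dj|vh] : path_dips h j \/ (v j.+1).2 <= h.
  case: dips => [|[k /andP[ik]]]; first by left; left.
  rewrite leq_eqVlt ltnS => /orP[/eqP -> //|kj kh]; first by right.
  by left; right; exists k; rewrite ?ik.
- have [hsj|sjh] := leP h (s j).2.
    have [k [w [kw pk kj kh above]]] := IH ij (ltnW jm) dj hsj.
    exists k, w; split=> //; first by case: kj => [/ltnW|]; [left|right].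
    apply: path_above_cat above _; rewrite sS.
    have [hv|vh] := leP h (v j.+1).2.
      by rewrite -(point1 v j); apply: path_above_seg; rewrite ?point1 // ltnW.
    have [xj|yj] := rect_step hist (ltnW jm); last first.
      by move: hsj vh; rewrite point_y yj subrr mulr0 addr0; lra.
    have -> : (v j.+1).1 = (s j).1 by rewrite point_x xj subrr mulr0 addr0.
    by apply: path_above_seg; rewrite ?lexx // ltnW.
  have hz : (s j).2 <= h <= (point v j 1).2 by rewrite point1 hs ltW.
  have [w /andP[sw w1] yw] := lerp_ivt s1 (or_introl hz); rewrite -point_y in yw.
  have /seg_ok[jw pw] : seg_start j <= w <= 1 by rewrite sw w1.
  exists j, w; split=> //; first by left.
  rewrite sS -(point1 v j); apply: path_above_seg; rewrite ?yw ?point1 //.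
    exact: ltnW.
  exact: le_trans sw.
have [j1 p1] : on_path m j (1 : R) /\ pos_le i0 t0 j (1 : R).
  by apply: seg_ok; rewrite s1 /=.
exists j, 1; split=> //; first by left.
- by rewrite point1; apply/le_anti; rewrite hs vh.
- rewrite sS -(point1 v j); apply: path_above_seg; rewrite ?point1 //.
  exact: ltnW.
Qed.

Definition length_bound j u := forall h, path_floor h j -> h <= (point v j u).2 ->
  plen v j u - plen v i0 t0 <= 2 * ((point v j u).1 - a.1) + a.2 + (point v j u).2 - 2 * h.

Definition bounded_before j :=
  forall k w, (k < j)%N -> on_path m k w -> pos_le i0 t0 k w -> length_bound k w.

Lemma length_bound_a : length_bound i0 t0.
Proof. by move=> h [ha _] _; lra. Qed.

Lemma length_bound_seg_start j : (i0 <= j)%N -> (j < m)%N -> bounded_before j ->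
  length_bound j (seg_start j).
Proof.
rewrite /seg_start leq_eqVlt => /orP[/eqP <-|].
  by rewrite ltnn => _ _; exact: length_bound_a.
case: j => // j ij jm before; rewrite ij => h fl hy.
rewrite ltnS in ij; have /andP[_ s1] := seg_start_range ij.
have s11 : seg_start j <= (1 : R) <= 1 by rewrite s1 lexx.
have := before j 1 (ltnSn j) (on_path_seg ij (ltnW jm) s11) (pos_le_seg_start ij s1).
rewrite plenS0 point0 -(point1 v j); apply; first exact: path_floor_le fl.
by rewrite point1 -(point0 v j.+1).
Qed.

Lemma length_bound_chord j w : (i0 <= j)%N -> (j < m)%N -> bounded_before j ->
  (v j).1 = (v j.+1).1 -> seg_start j <= w <= 1 ->
  path_dips (point v j w).2 j -> (point v j w).2 <= (s j).2 -> length_bound j w.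
Proof.
move=> ij jm before vert sw dips ys h fl hy.
have [k [w' [kw pk kj ky above]]] := back_chord_exists ij jm dips ys.
have xs : (s j).1 = (point v j w).1 by rewrite !point_x vert subrr !mulr0.
rewrite xs in above; have [xkj _] := above.
have bound_k : plen v k w' - plen v i0 t0 <=
    2 * ((point v k w').1 - a.1) + a.2 + (point v k w').2 - 2 * h.
  have hk : h <= (point v k w').2 by rewrite ky.
  case: kj => [kj|[ek ew]]; last first.
    by rewrite ek ew in hk *; apply: length_bound_a (path_floor_le ij fl) hk.
  by apply: before => //; exact: path_floor_le (ltnW kj) fl.
have chord := tame.2 k w' j w kw (on_path_seg ij jm sw) ky
  (seg_in_H_chord hist kw ky erefl above).
have dx : `|(point v k w').1 - (point v j w).1| = (point v j w).1 - (point v k w').1.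
  by rewrite distrC ger0_norm // subr_ge0.
have := ler_norm (plen v j w - plen v k w'); rewrite /sublen dx in chord.
lra.
Qed.

Lemma path_dips_le g h j : g <= h -> path_dips g j -> path_dips h j.
Proof.
move=> gh [ag|[k kj kg]]; first by left; exact: le_trans gh.
by right; exists k => //; exact: le_trans gh.
Qed.

Lemma length_bound_descent j u : (i0 <= j)%N -> (j < m)%N -> bounded_before j ->
  (v j).1 = (v j.+1).1 -> (v j.+1).2 < (v j).2 -> seg_start j <= u <= 1 ->
  length_bound j u.
Proof.
move=> ij jm before vert down /andP[su u1] h fl hy.
have ys : (point v j u).2 <= (s j).2 by rewrite !point_y; nra.
have [g [gfl gdips]] := path_floor_attained j.
have [gy|yg] := leP g (point v j u).2.
  apply: length_bound_chord => //; [by rewrite su u1|exact: path_dips_le gdips].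
have gs := path_floor_seg_start ij gfl.
have ygs : (point v j u).2 <= g <= (s j).2 by rewrite gs ltW.
have [w /andP[sw wu] yw] := lerp_ivt su (or_intror ygs).
rewrite -point_y in yw.
have sw1 : seg_start j <= w <= 1 by rewrite sw (le_trans wu u1).
have := @length_bound_chord j w ij jm before vert sw1; rewrite yw.
move=> /(_ gdips gs g gfl); rewrite yw lexx => /(_ isT) bound_w.
have sl : seglen v j = (v j).2 - (v j.+1).2.
  by rewrite /seglen vert subrr normr0 add0r ltr0_norm ?subr_lt0 // opprB.
rewrite (plen_shift v j u w) sl.
move: yw hy bound_w; rewrite !point_x !point_y vert subrr !mulr0; nra.
Qed.

Lemma length_bound_seg j u : (i0 <= j)%N -> (j < m)%N -> bounded_before j ->
  seg_start j <= u <= 1 -> length_bound j u.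
Proof.
move=> ij jm before su01; have /andP[su u1] := su01.
have [vert|horiz] := rect_step hist jm; last first.
  move=> h fl hy; have start := length_bound_seg_start ij jm before.
  have := start h fl (path_floor_seg_start ij fl).
  have sl : seglen v j = (v j.+1).1 - (v j).1.
    by rewrite /seglen horiz subrr normr0 addr0 ger0_norm // subr_ge0 (vx_step hist).
  rewrite (plen_shift v j u (seg_start j)) sl !point_x !point_y horiz subrr !mulr0.
  have := vx_step hist jm; nra.
have [up|down] := leP (v j).2 (v j.+1).2; last exact: length_bound_descent.
move=> h fl hy; have start := length_bound_seg_start ij jm before.
have := start h fl (path_floor_seg_start ij fl).
have sl : seglen v j = (v j.+1).2 - (v j).2.
  by rewrite /seglen vert subrr normr0 add0r ger0_norm // subr_ge0.
rewrite (plen_shift v j u (seg_start j)) sl !point_x !point_y vert subrr !mulr0.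
nra.
Qed.

Lemma length_bound_all j u : on_path m j u -> pos_le i0 t0 j u -> length_bound j u.
Proof.
elim/ltn_ind: j u => j IH u [jm /andP[u0 u1]] p.
have ij : (i0 <= j)%N by case: p => [/ltnW|[->]].
apply: length_bound_seg => //; first by move=> k w kj; apply: IH.
rewrite u1 andbT /seg_start.
by case: p => [-> //|[<- t0u]]; rewrite ltnn.
Qed.

End Tame.

Lemma sublen_le_floor (R : realFieldType) (v : nat -> R * R) (m : nat) i t j u h :
  tame_histogram v m -> on_path m i t -> on_path m j u ->
  (forall k w, on_path m k w -> between i t j u k w -> h <= (point v k w).2) ->
  sublen v i t j u <=
    2 * `|(point v i t).1 - (point v j u).1| + (point v i t).2 + (point v j u).2 - 2 * h.
Proof.
move=> tame; wlog ord : i t j u / pos_le i t j u.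
  move=> ordered it ju floor; have [ij|ji] := pos_le_total i t j u; first exact: ordered.
  have := ordered j u i t ji ju it (fun k w kw b => floor k w kw (between_sym b)).
  by rewrite /sublen distrC [`|(point v j u).1 - _|]distrC; lra.
move=> it ju floor.
have fl : path_floor v i t h j.
  split=> [|k /andP[ik kj]]; first exact: floor i t it (between_l i t j u).
  have kw : on_path m k (0 : R).
    by split; [exact: leq_ltn_trans kj ju.1|rewrite lexx ler01].
  rewrite -(point0 v k); apply: floor kw _; left; split; first by left.
  move: kj; rewrite leq_eqVlt => /orP[/eqP ->|]; last by left.
  by right; split=> //; case: ju => _ /andP[].
have := length_bound_all tame it ju ord fl (floor j u ju (between_r i t j u)).
have := plen_mono v ord it.2 ju.2; have := ler_norm ((point v j u).1 - (point v i t).1).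
rewrite /sublen distrC => ? mono.
by rewrite ger0_norm ?subr_ge0 //; lra.
Qed.

Theorem lemma7p2 (R : realFieldType) (v : nat -> R * R) (m : nat)
  (ia : nat) (ta : R) (ib : nat) (tb : R) :
  tame_histogram v m ->
  on_path m ia ta -> on_path m ib tb ->
  (forall k w, on_path m k w -> between ia ta ib tb k w ->
     (point v ib tb).2 <= (point v k w).2) ->
  sublen v ia ta ib tb <=
    2 * `|(point v ia ta).1 - (point v ib tb).1|
    + `|(point v ia ta).2 - (point v ib tb).2|.
Proof.
move=> tame a_on b_on bottom.
have yba := bottom _ _ a_on (between_l ia ta ib tb).
have := sublen_le_floor tame a_on b_on bottom.
rewrite [`|(point v ia ta).2 - _|]ger0_norm ?subr_ge0 //; lra.
Qed.
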